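(* Let $\sigma\in\Sigma^0_{E_N}$ be non-trivial, and assume there is an edge $e\in\mathrm{supp}\,\sigma$ with $\partial\hat\partial\partial\hat\partial e\subseteq E_N$. Then $|(\mathrm{supp}\,\sigma)^+|\ge 8$.
   Context: Work on $\mathbb Z^4$; oriented edges come in pairs $e,-e$; $dx_j=(x,x+\mathbf e_j)$ positively oriented. For a plaquette $p=dx_{j_1}\wedge dx_{j_2}$ ($j_1<j_2$), $\partial p=\{dx_{j_1},d(x+\mathbf e_{j_1})_{j_2},-d(x+\mathbf e_{j_2})_{j_1},-dx_{j_2}\}$, $\partial(-p)=-\partial p$. $\hat\partial e=\{p:e\in\partial p\}$; for sets $\partial A=\bigcup_{p\in A}\partial p$, $\hat\partial B=\bigcup_{e\in B}\hat\partial e$, so $\partial\hat\partial\partial\hat\partial e$ is obtained by applying these operations successively to $\{e\}$. $B_N=[-N,N]^4\cap\mathbb Z^4$; $E_N$, $P_N$ are the oriented edges/plaquettes with all vertices in $B_N$. $G=\mathbb Z_n$. $\Sigma_{E_N}$: maps $\sigma:E_N\to G$ with $\sigma_{-e}=-\sigma_e$; $(d\sigma)_p=\sum_{e\in\partial p}\sigma_e$; $\Sigma^0_{E_N}=\{d\sigma=0\}$. $\mathrm{supp}\,\sigma=\{e:\sigma_e\ne0\}$ and $(\cdot)^+$ denotes the positively oriented elements of a set. *)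

From mathcomp Require Import all_boot all_order all_algebra.
Set Implicit Arguments. Unset Strict Implicit. Unset Printing Implicit Defensive.
Import GRing.Theory Num.Theory.
Local Open Scope ring_scope.

Definition V := {ffun 'I_4 -> int}.
Definition shift (x : V) (j : 'I_4) : V := [ffun i => x i + (nat_of_bool (i == j))%:Z].

(* oriented edges: (x, j, true) = dx_j = (x, x+e_j) (positively oriented);
   (x, j, false) = -dx_j = (x+e_j, x).  This is a bijective encoding. *)
Definition edge := (V * 'I_4 * bool)%type.
Definition ebase (e : edge) : V := e.1.1.
Definition edir (e : edge) : 'I_4 := e.1.2.
Definition epos (e : edge) : bool := e.2.
Definition eopp (e : edge) : edge := (ebase e, edir e, ~~ epos e).
Definition dx (x : V) (j : 'I_4) : edge := (x, j, true).

(* oriented plaquettes: (x, j1, j2, true) = dx_{j1} /\ dx_{j2} with j1 < j2,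
   (x, j1, j2, false) = its negative *)
Definition plaq := (V * 'I_4 * 'I_4 * bool)%type.
Definition pbase (p : plaq) : V := p.1.1.1.
Definition pj1 (p : plaq) : 'I_4 := p.1.1.2.
Definition pj2 (p : plaq) : 'I_4 := p.1.2.
Definition ppos (p : plaq) : bool := p.2.
Definition is_plaq (p : plaq) : Prop := (pj1 p < pj2 p)%N.

Definition bdpos (x : V) (j1 j2 : 'I_4) : seq edge :=
  [:: dx x j1; dx (shift x j1) j2; eopp (dx (shift x j2) j1); eopp (dx x j2)].
Definition bd (p : plaq) : seq edge :=
  if ppos p then bdpos (pbase p) (pj1 p) (pj2 p)
  else map eopp (bdpos (pbase p) (pj1 p) (pj2 p)).

Definition eset := edge -> Prop.
Definition pset := plaq -> Prop.
Definition sing (e : edge) : eset := fun e' => e' = e.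
Definition hatd (B : eset) : pset := fun p => is_plaq p /\ exists2 e, e \in bd p & B e.
Definition bdset (A : pset) : eset := fun e => exists2 p, A p & e \in bd p.

Definition in_box (N : nat) (x : V) : Prop := forall i, `|x i| <= N%:Z.
Definition in_EN (N : nat) (e : edge) : Prop :=
  in_box N (ebase e) /\ in_box N (shift (ebase e) (edir e)).
Definition in_PN (N : nat) (p : plaq) : Prop :=
  [/\ in_box N (pbase p), in_box N (shift (pbase p) (pj1 p)),
      in_box N (shift (pbase p) (pj2 p)) & in_box N (shift (shift (pbase p) (pj1 p)) (pj2 p))].

Definition dsig (n : nat) (sigma : edge -> 'Z_n) (p : plaq) : 'Z_n :=
  \sum_(e <- bd p) sigma e.

Definition Sigma0 (N n : nat) (sigma : edge -> 'Z_n) : Prop :=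
  (forall e, in_EN N e -> sigma (eopp e) = - sigma e) /\
  (forall p, is_plaq p -> in_PN N p -> dsig sigma p = 0).

Definition supp (N n : nat) (sigma : edge -> 'Z_n) : eset :=
  fun e => in_EN N e /\ sigma e != 0.

From mathcomp Require Import all_boot all_order all_algebra.
From mathcomp Require Import zify.
Import GRing.Theory.
Local Open Scope ring_scope.
Set Implicit Arguments. Unset Strict Implicit. Unset Printing Implicit Defensive.
Set Bullet Behavior "Strict Subproofs".

(* Let e = dx_j at the vertex x carry a nonzero value of the
   closed configuration sigma.  Every plaquette p has d(sigma)_p = 0, i.e. the
   four values of sigma around p sum to zero; so if one boundary edge of p is
   in the support, a second one is ("spreading").  For each of the three
   directions k <> j and each sign s, the plaquette spanned by e and s*e_k
   thus contains a support edge g_(k,s) <> e; these six edges lie in six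
   different plaquettes and are pairwise distinct.  Spreading once more from
   g_(k1,+) through a suitably chosen plaquette gives an eighth support edge
   lying outside all six plaquettes.  The hypothesis on
   partial hat-partial partial hat-partial e guarantees that every plaquette
   used in these two spreading steps lies in P_N, so closedness applies. *)

Lemma uniq_map_inj_in (T1 T2 : eqType) (g : T1 -> T2) (s : seq T1) :
  uniq (map g s) -> {in s &, injective g}.
Proof.
elim: s => //= a s IH /andP[gas us] x y; rewrite !inE.
case/predU1P=> [->|xs] /predU1P[->|ys] // gxy.
- by move: gas; rewrite gxy (map_f g ys).
- by move: gas; rewrite -gxy (map_f g xs).
- exact: IH.
Qed.

Lemma sum_zero_other_nonzero (T : eqType) (R : zmodType) (r : seq T)
    (F : T -> R) x :
  uniq r -> \sum_(y <- r) F y = 0 -> x \in r -> F x != 0 ->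
  exists2 y, y \in r & y != x /\ F y != 0.
Proof.
move=> ur sum0 xr Fx.
have [/hasP[y yr /andP[yx Fy]]|others0] :=
  boolP (has (fun y => (y != x) && (F y != 0)) r); first by exists y.
move: sum0; rewrite (bigD1_seq x) //= big1_seq ?addr0 => [F0|y /andP[yx yr]].
  by rewrite F0 eqxx in Fx.
by apply/eqP; apply: contraNT others0 => Fy; apply/hasP; exists y; rewrite ?yx.
Qed.

(* The key of an oriented edge forgets its orientation; the key c stands for
   the positively oriented edge (c, true). *)
Definition key (f : edge) : V * 'I_4 := (ebase f, edir f).

Definition keysP (y : V) (a b : 'I_4) : seq (V * 'I_4) :=
  [:: (y, a); (shift y a, b); (shift y b, a); (y, b)].

Lemma keys_bd (p : plaq) : map key (bd p) = keysP (pbase p) (pj1 p) (pj2 p).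
Proof. by rewrite /bd; case: (ppos p); rewrite // -map_comp. Qed.

Lemma keysP_sym (y : V) (a b : 'I_4) : keysP y b a =i keysP y a b.
Proof. by move=> c; rewrite !inE; do ?bool_congr. Qed.

Lemma keysP_uniq (y : V) (a b : 'I_4) : a != b -> uniq (keysP y a b).
Proof.
move=> ab; have ba : b != a by rewrite eq_sym.
rewrite /= !inE !negb_or !andbT -!andbA.
repeat (apply/andP; split); apply/eqP; case.
all: try by move=> *; apply: (negP ab); apply/eqP; congruence.
all: move=> E; have := congr1 (fun f : V => f a) E.
all: have := congr1 (fun f : V => f b) E.
all: rewrite /= !ffunE !eqxx ?(negbTE ab) ?(negbTE ba) /=; lia.
Qed.

Lemma plaq_with_keys (y : V) (a b : 'I_4) : a != b ->
  exists2 Q : plaq, is_plaq Q & map key (bd Q) =i keysP y a b.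
Proof.
move=> ab; case: (ltngtP a b) => [lt|gt|eq].
- by exists (y, a, b, true) => //; rewrite keys_bd.
- by exists (y, b, a, true) => //; rewrite keys_bd; apply: keysP_sym.
- by move: ab; rewrite (val_inj eq) eqxx.
Qed.

Lemma plaq_keys_uniq (p : plaq) : is_plaq p -> uniq (map key (bd p)).
Proof. by move=> pp; rewrite keys_bd keysP_uniq // neq_ltn pp. Qed.

Lemma keys_in_PN (N : nat) (p : plaq) :
  {in map key (bd p), forall c, in_EN N (c, true)} -> in_PN N p.
Proof.
rewrite keys_bd => inEN.
have [y_in ya_in] := inEN _ (mem_head _ _).
have [_ yab_in] : in_EN N (shift (pbase p) (pj1 p), pj2 p, true).
  by apply: inEN; rewrite !inE eqxx orbT.
have [_ yb_in] : in_EN N (pbase p, pj2 p, true).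
  by apply: inEN; rewrite !inE eqxx !orbT.
by split.
Qed.

Lemma supp_key (N n : nat) (sigma : edge -> 'Z_n) (f : edge) :
  Sigma0 N sigma -> in_EN N f -> (sigma f != 0) = (sigma (key f, true) != 0).
Proof.
case: f => [[v d] [|]] [antisym _] fE //.
by rewrite (antisym (v, d, true) fE) oppr_eq0.
Qed.

Lemma plaquette_spread (N n : nat) (sigma : edge -> 'Z_n) (p : plaq) c :
  Sigma0 N sigma -> is_plaq p ->
  {in map key (bd p), forall c', in_EN N (c', true)} ->
  c \in map key (bd p) -> supp N sigma (c, true) ->
  exists2 c', c' \in map key (bd p) & c' != c /\ supp N sigma (c', true).
Proof.
move=> closed pp inEN /mapP[f fp ->] [_ sf].
have keys_inj := uniq_map_inj_in (plaq_keys_uniq pp).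
have fE : in_EN N f := inEN _ (map_f key fp).
have sfE : sigma f != 0 by rewrite (supp_key closed fE).
have [f' f'p [f'f sf']] := sum_zero_other_nonzero (map_uniq (plaq_keys_uniq pp))
  (closed.2 p pp (keys_in_PN inEN)) fp sfE.
have f'E : in_EN N f' := inEN _ (map_f key f'p).
exists (key f'); first exact: map_f.
split; last by split; rewrite // -(supp_key closed f'E).
by apply: contra f'f => /eqP /keys_inj -> //.
Qed.

Lemma keysP_spread (N n : nat) (sigma : edge -> 'Z_n) (y : V) (a b : 'I_4) c :
  a != b -> Sigma0 N sigma ->
  {in keysP y a b, forall c', in_EN N (c', true)} ->
  c \in keysP y a b -> supp N sigma (c, true) ->
  exists2 c', c' \in keysP y a b & c' != c /\ supp N sigma (c', true).
Proof.
move=> ab closed inEN cin sc; have [Q pQ kQ] := plaq_with_keys y ab.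
have inEN' : {in map key (bd Q), forall c', in_EN N (c', true)}.
  by move=> c'; rewrite kQ; apply: inEN.
have [|c' c'Q c'c] := plaquette_spread closed pQ inEN' _ sc; first by rewrite kQ.
by exists c'; rewrite -?kQ.
Qed.

Definition flipP (p : plaq) : plaq := (pbase p, pj1 p, pj2 p, ~~ ppos p).

Lemma bd_flipP (p : plaq) : bd (flipP p) = map eopp (bd p).
Proof. by rewrite /bd /flipP /=; case: (ppos p). Qed.

Lemma key_eq (f f' : edge) : key f = key f' -> f = f' \/ f = eopp f'.
Proof.
case: f f' => [[v d] b] [[v' d'] b']; rewrite /key /ebase /edir /= => -[-> ->].
by case: b; case: b'; [left|right|right|left].
Qed.

Lemma hatd_key (B : eset) (Q : plaq) (g : edge) :
  is_plaq Q -> key g \in map key (bd Q) -> B g ->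
  exists2 Q', hatd B Q' & map key (bd Q') = map key (bd Q).
Proof.
move=> pQ /mapP[f fQ /key_eq[->|->]] Bg.
- by exists Q => //; split => //; exists f.
- exists (flipP Q); last by rewrite bd_flipP -map_comp.
  by split => //; exists (eopp f); rewrite // bd_flipP map_f.
Qed.

(* The hypothesis on partial hat-partial partial hat-partial e says: if
   P is a plaquette through e and Q a plaquette sharing an edge with P, then
   all edges of Q are in E_N. *)
Lemma second_neighbourhood_in_EN (N : nat) (e : edge) y a b z a' b' c :
  (forall e', bdset (hatd (bdset (hatd (sing e)))) e' -> in_EN N e') ->
  a != b -> a' != b' -> key e \in keysP y a b -> c \in keysP y a b ->
  c \in keysP z a' b' -> {in keysP z a' b', forall c', in_EN N (c', true)}.
Proof.
move=> around ab ab'; have [P pP kP] := plaq_with_keys y ab.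
have [Q pQ kQ] := plaq_with_keys z ab'.
rewrite -!kP -kQ => eP cP cQ c'; rewrite -kQ => c'Q.
have [P' hP' kP'] := hatd_key (B := sing e) pP eP (erefl e).
move: cP; rewrite -kP' => /mapP[f fP' cf]; rewrite cf in cQ.
have fB : bdset (hatd (sing e)) f by exists P'.
have [Q' hQ' kQ'] := hatd_key pQ cQ fB.
move: c'Q; rewrite -kQ' => /mapP[f' f'Q' ->].
by apply: (around f'); exists Q'.
Qed.

Definition lo (c : V * 'I_4) (i : 'I_4) : int := c.1 i.
Definition hi (c : V * 'I_4) (i : 'I_4) : int := c.1 i + (nat_of_bool (i == c.2))%:Z.

Definition unshift (x : V) (a : 'I_4) : V := [ffun i => x i - (nat_of_bool (i == a))%:Z].

Lemma shift_unshift (x : V) (a : 'I_4) : shift (unshift x a) a = x.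
Proof. by apply/ffunP => i; rewrite !ffunE subrK. Qed.

(* Keys of the plaquette spanned by dx_j and e_k (s = true) or -e_k
   (s = false); it contains (x, j). *)
Definition side_keys (x : V) (j k : 'I_4) (s : bool) : seq (V * 'I_4) :=
  keysP (if s then x else unshift x k) j k.

Lemma side_keys_base (x : V) (j k : 'I_4) (s : bool) : (x, j) \in side_keys x j k s.
Proof. by case: s; rewrite /side_keys /keysP ?shift_unshift !inE eqxx ?orbT. Qed.

(* Coordinate description of the edges c <> (x, j) of side_keys x j k s:
   c reaches x_k + 1 (resp. x_k - 1) without crossing x_k, keeps the other
   coordinates of x off the (j, k)-plane, and stays within [x_j, x_j + 1]. *)
Definition side_edge (x : V) (j k : 'I_4) (s : bool) (c : V * 'I_4) : Prop :=
  [/\ (if s then hi c k = x k + 1 else lo c k = x k - 1),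
      (if s then x k <= lo c k else hi c k <= x k),
      (forall i, i != k -> i != j -> lo c i = x i /\ hi c i = x i),
      x j <= lo c j & hi c j <= x j + 1].

Lemma side_keys_edge (x : V) (j k : 'I_4) (s : bool) c :
  k != j -> c \in side_keys x j k s -> c != (x, j) -> side_edge x j k s c.
Proof.
move=> kj; have jk : j != k by rewrite eq_sym.
case: s; rewrite /side_keys /keysP ?shift_unshift !inE => /or4P[] /eqP -> //;
  rewrite ?eqxx // => _.
all: split; [ | | move=> i ik ij; split | | ]; rewrite /hi /lo /= ?ffunE ?eqxx
  ?(negbTE kj) ?(negbTE jk) ?(negbTE ik) ?(negbTE ij) /=; lia.
Qed.

Lemma side_edge_neq (x : V) (j k k' : 'I_4) (s s' : bool) c c' :
  side_edge x j k s c -> side_edge x j k' s' c' -> k != j -> k' != j ->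
  (k != k') || (s != s') -> c != c'.
Proof.
move=> [A1 B1 C1 D1 E1] [A2 B2 C2 D2 E2] kj k'j.
case: (eqVneq k k') => [kk'|kk'] /= ss'; apply/eqP => E; subst c'.
- by subst k'; case: s A1 B1 ss'; case: s' A2 B2 => //= *; lia.
- by have [? ?] := C2 k kk' kj; case: s A1 B1 => /= *; lia.
Qed.

Lemma side_edge_base_neq (x : V) (j k : 'I_4) (s : bool) c :
  side_edge x j k s c -> k != j -> c != (x, j).
Proof.
move=> [A1 B1 _ _ _] kj; apply/eqP => E; subst c.
by move: A1; rewrite /hi /lo /= (negbTE kj) /=; case: s B1 => /= *; lia.
Qed.

(* Edges outside all the side plaquettes: they either stick out of the slab
   x_j <= . <= x_j + 1, or are displaced from x in two directions off j. *)
Definition far_edge (x : V) (j : 'I_4) (h : V * 'I_4) : Prop :=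
  (exists a b, [/\ a != b, a != j, b != j, lo h a = x a + 1 & hi h b = x b + 1])
  \/ lo h j = x j - 1 \/ hi h j = x j + 1 + 1.

Lemma far_side_neq (x : V) (j k : 'I_4) (s : bool) h c :
  far_edge x j h -> side_edge x j k s c -> k != j -> h != c.
Proof.
move=> far [A1 B1 C1 D1 E1] kj; apply/eqP => E; subst c.
case: far => [[a [b [ab aj bj la hb]]]|[?|?]]; try lia.
case: (eqVneq k a) => [eka|ka].
- by subst k; have [_ ?] := C1 b (contra_neq esym ab) bj; lia.
- by have [? _] := C1 a (contra_neq esym ka) aj; lia.
Qed.

Lemma far_base_neq (x : V) (j : 'I_4) h : far_edge x j h -> h != (x, j).
Proof.
move=> far; apply/eqP => E; subst h.
case: far => [[a [b [_ _ _ H _]]]|[H|H]]; move: H;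
  rewrite /lo /hi /= ?eqxx /=; lia.
Qed.

Section Spreading.

Variables (N n : nat) (sigma : edge -> 'Z_n) (e : edge).
Hypothesis closed : Sigma0 N sigma.
Hypothesis around_e :
  forall e', bdset (hatd (bdset (hatd (sing e)))) e' -> in_EN N e'.

(* Spreading along a plaquette Q that shares the support edge c with a
   plaquette through e; Q is in P_N by the hypothesis on e. *)
Lemma spread_near_e y a b z a' b' c :
  a != b -> a' != b' -> key e \in keysP y a b -> c \in keysP y a b ->
  c \in keysP z a' b' -> supp N sigma (c, true) ->
  exists2 c', c' \in keysP z a' b' & c' != c /\ supp N sigma (c', true).
Proof.
move=> ab ab' eP cP cQ; apply: (keysP_spread ab' closed _ cQ).
exact: second_neighbourhood_in_EN around_e ab ab' eP cP cQ.
Qed.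

Variables (x : V) (j : 'I_4).
Hypothesis key_e : key e = (x, j).
Hypothesis supp_e : supp N sigma ((x, j), true).

Lemma side_support k s : k != j ->
  exists g, side_edge x j k s g /\ supp N sigma (g, true).
Proof.
move=> kj; have jk : j != k by rewrite eq_sym.
have eP : key e \in side_keys x j k s by rewrite key_e side_keys_base.
have xP := side_keys_base x j k s.
have [g gP [gx sg]] := spread_near_e jk jk eP xP xP supp_e.
by exists g; split => //; apply: side_keys_edge.
Qed.

(* Spreading twice, from e through the plaquette spanned by e_j and e_k,
   then through a plaquette leaving the (j, k)-plane or the slab of e,
   yields a support edge outside all six side plaquettes. *)
Lemma far_support k k' : k != j -> k' != j -> k != k' ->
  exists h, far_edge x j h /\ supp N sigma (h, true).
Proof.
move=> kj k'j kk'; have jk : j != k by rewrite eq_sym.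
have jk' : j != k' by rewrite eq_sym.
have eP : key e \in keysP x j k by rewrite key_e !inE eqxx.
have xP : (x, j) \in keysP x j k by rewrite !inE eqxx.
have [g gP [gx sg]] := spread_near_e jk jk eP xP xP supp_e.
have g_in : g \in keysP x j k := gP.
move: gP gx sg; rewrite !inE => /or4P[] /eqP gE; subst g; rewrite ?eqxx // => _ sg.
- have gQ : (shift x j, k) \in keysP (shift x j) j k by rewrite !inE eqxx ?orbT.
  have [h hQ [hg sh]] := spread_near_e jk jk eP g_in gQ sg.
  exists h; split => //; right; right; move: hQ hg; rewrite !inE.
  case/or4P=> /eqP ->; rewrite ?eqxx // /hi /= ?ffunE ?eqxx ?(negbTE kj)
    ?(negbTE jk) /= => _; lia.
- have gQ : (shift x k, j) \in keysP (shift x k) j k' by rewrite !inE eqxx ?orbT.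
  have [h hQ [hg sh]] := spread_near_e jk jk' eP g_in gQ sg.
  exists h; split => //; left; exists k, k'; move: hQ hg; rewrite !inE.
  case/or4P=> /eqP ->; rewrite ?eqxx // => _; split => //.
  all: rewrite /hi /lo /= ?ffunE ?eqxx ?(negbTE kj) ?(negbTE jk) ?(negbTE k'j)
    ?(negbTE jk') ?(negbTE kk') ?(negbTE (contra_neq esym kk')) /=; lia.
- have gQ : (x, k) \in keysP (unshift x j) j k
    by rewrite /keysP shift_unshift !inE eqxx !orbT.
  have [h hQ [hg sh]] := spread_near_e jk jk eP g_in gQ sg.
  exists h; split => //; right; left.
  move: hQ hg; rewrite /keysP shift_unshift !inE.
  case/or4P=> /eqP ->; rewrite ?eqxx // /lo /= ?ffunE ?eqxx ?(negbTE kj)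
    ?(negbTE jk) /= => _; lia.
Qed.

End Spreading.

Lemma other_directions (j : 'I_4) : exists k1 k2 k3 : 'I_4,
  [/\ k1 != j, k2 != j, k3 != j & [/\ k1 != k2, k1 != k3 & k2 != k3]].
Proof.
case: j => [[|[|[|[|m]]]] Hm] //.
- by exists (Ordinal (isT : (1 < 4)%N)), (Ordinal (isT : (2 < 4)%N)), (Ordinal (isT : (3 < 4)%N)).
- by exists (Ordinal (isT : (0 < 4)%N)), (Ordinal (isT : (2 < 4)%N)), (Ordinal (isT : (3 < 4)%N)).
- by exists (Ordinal (isT : (0 < 4)%N)), (Ordinal (isT : (1 < 4)%N)), (Ordinal (isT : (3 < 4)%N)).
- by exists (Ordinal (isT : (0 < 4)%N)), (Ordinal (isT : (1 < 4)%N)), (Ordinal (isT : (2 < 4)%N)).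
Qed.

Lemma eight_distinct (x : V) (j k1 k2 k3 : 'I_4) g1 g2 g3 g4 g5 g6 h :
  [/\ k1 != j, k2 != j, k3 != j & [/\ k1 != k2, k1 != k3 & k2 != k3]] ->
  side_edge x j k1 true g1 -> side_edge x j k1 false g2 ->
  side_edge x j k2 true g3 -> side_edge x j k2 false g4 ->
  side_edge x j k3 true g5 -> side_edge x j k3 false g6 -> far_edge x j h ->
  uniq [:: (x, j); g1; g2; g3; g4; g5; g6; h].
Proof.
move=> [k1j k2j k3j [k12 k13 k23]] *.
rewrite /= !inE !negb_or; repeat (apply/andP; split) => //.
all: first [ by rewrite eq_sym; apply: side_edge_base_neq; eassumption
           | by rewrite eq_sym; apply: far_base_neq; eassumption
           | by rewrite eq_sym; apply: far_side_neq; eassumption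
           | by apply: side_edge_neq; try eassumption; rewrite ?eqxx ?k12 ?k13 ?k23 ].
Qed.

Unset Implicit Arguments.

Theorem mainTheorem5 (N n : nat) (sigma : edge -> 'Z_n) :
  (1 < n)%N ->
  Sigma0 N sigma ->
  (exists e, supp N sigma e) ->
  (exists e, supp N sigma e /\
     (forall e', bdset (hatd (bdset (hatd (sing e)))) e' -> in_EN N e')) ->
  exists s : seq edge,
    [/\ size s = 8%N, uniq s & forall e, e \in s -> supp N sigma e /\ epos e].
Proof.
move=> _ closed _ [e [[eEN enz] around]].
have key_e : key e = (ebase e, edir e) by [].
have supp_e : supp N sigma (key e, true).
  by split; rewrite // -(supp_key closed eEN).
have [k1 [k2 [k3 dirs]]] := other_directions (edir e).
have [k1j k2j k3j [k12 _ _]] := dirs.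
have [g1 [F1 S1]] := side_support closed around key_e supp_e true k1j.
have [g2 [F2 S2]] := side_support closed around key_e supp_e false k1j.
have [g3 [F3 S3]] := side_support closed around key_e supp_e true k2j.
have [g4 [F4 S4]] := side_support closed around key_e supp_e false k2j.
have [g5 [F5 S5]] := side_support closed around key_e supp_e true k3j.
have [g6 [F6 S6]] := side_support closed around key_e supp_e false k3j.
have [h [Fh Sh]] := far_support closed around key_e supp_e k1j k2j k12.
exists (map (fun c => (c, true)) [:: key e; g1; g2; g3; g4; g5; g6; h]); split => //.
- by rewrite map_inj_uniq ?(eight_distinct dirs F1 F2 F3 F4 F5 F6 Fh) => // c c' [].
- move=> f /mapP[c + ->]; rewrite !inE.
  by repeat case/orP=> [/eqP-> //|]; move/eqP->.
Qed.
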